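(* Let $E$ be a theme and let $F\subset E$ be a monogenic sub-$\tilde{\mathcal A}$-module of $E$. Then $F$ is a theme. Moreover, if $F$ is normal in $E$, then the quotient $E/F$ is also a theme.
   Context: $\tilde{\mathcal A}$ denotes the $\mathbb C$-algebra of formal series $\sum_{\nu\ge0}P_\nu(a)b^\nu$ with $P_\nu\in\mathbb C[z]$, whose product is determined by the commutation relation $ab-ba=b^2$ and by the continuity of left and right multiplication by $a$ for the $b$-adic topology; it contains $\mathbb C[[b]]$. An (a,b)-module is a left $\tilde{\mathcal A}$-module which is free of finite rank over $\mathbb C[[b]]$; its rank is its $\mathbb C[[b]]$-rank. A module is monogenic if it is generated as a left $\tilde{\mathcal A}$-module by one element. A sub-(a,b)-module $F\subset E$ is normal if $F\cap bE=bF$ (equivalently $E/F$ is again an (a,b)-module). For a rational $\lambda\in\,]0,1]$ let $\Xi_\lambda=\bigoplus_{j\ge0}\mathbb C[[b]]e_{\lambda,j}$ (finite sums; think of $e_{\lambda,j}=s^{\lambda-1}(\log s)^j/j!$, with $a$ = multiplication by $s$ and $b$ = primitive vanishing at $0$), where $a$ is defined by $ae_{\lambda,0}=\lambda be_{\lambda,0}$, $ae_{\lambda,j}=\lambda be_{\lambda,j}+be_{\lambda,j-1}$ for $j\ge1$, extended via $aS(b)=S(b)a+b^2S'(b)$ for $S\in\mathbb C[[b]]$. Put $\Xi=\bigoplus_{\lambda\in\mathbb Q\cap]0,1]}\Xi_\lambda$, a left $\tilde{\mathcal A}$-module. A theme is a left $\tilde{\mathcal A}$-module isomorphic to $\tilde{\mathcal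 A}\varphi\subset\Xi$ for some $\varphi\in\Xi$. *)

From HB Require Import structures.
From mathcomp Require Import all_boot all_order all_algebra.
From mathcomp Require Import complex.
From mathcomp Require Import Rstruct.
From Stdlib Require Import Reals.
Set Implicit Arguments. Unset Strict Implicit. Unset Printing Implicit Defensive.
Import Order.TTheory GRing.Theory Num.Theory.
Local Open Scope ring_scope.

Definition CC : Type := (Rdefinitions.R)[i].

(* An element is recorded by its coefficients:
   x lam j n = coefficient of b^n in the C[[b]]-coordinate of x on
   e_{lam,j}.  Membership in Xi (= finite sums, lam in Q cap ]0,1]) is
   the predicate [inXi]. *)
Definition Xi : Type := rat -> nat -> nat -> CC.

Definition Xi0 : Xi := fun _ _ _ => 0.
Definition Xiadd (x y : Xi) : Xi := fun l j n => x l j n + y l j n.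
Definition Xiscale (c : CC) (x : Xi) : Xi := fun l j n => c * x l j n.

Definition inXi (x : Xi) : Prop :=
  (forall (l : rat) (j n : nat), ~ (0 < l /\ l <= 1) -> x l j n = 0) /\
  exists s : seq (rat * nat),
    forall (l : rat) (j n : nat), (l, j) \notin s -> x l j n = 0.

(* b : multiplication of the C[[b]]-coordinates by b. *)
Definition opb (x : Xi) : Xi :=
  fun l j n => if n is m.+1 then x l j m else 0.

(* a : a(S e_{l,j}) = S (l b e_{l,j} + b e_{l,j-1}) + b^2 S' e_{l,j}
   (with e_{l,-1} = 0), so the coordinate on e_{l,j} of a x is
   l b x_{l,j} + b^2 x_{l,j}' + b x_{l,j+1}. *)
Definition opa (x : Xi) : Xi :=
  fun l j n => if n is m.+1
               then (ratr l + m%:R) * x l j m + x l j.+1 m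
               else 0.

Definition polyA (p : {poly CC}) (x : Xi) : Xi :=
  fun l j n => \sum_(k < size p) p`_k * iter k opa x l j n.

(* The algebra A~ : formal series sum_nu P_nu(a) b^nu, P_nu in C[z]. *)
Definition Atilde : Type := nat -> {poly CC}.

(* Action of u = sum_nu P_nu(a) b^nu on Xi.  Both a and b raise the
   b-adic order by 1, so only nu <= n contributes to the coefficient
   of b^n: this is the b-adic limit of the partial sums. *)
Definition actA (u : Atilde) (x : Xi) : Xi :=
  fun l j n => \sum_(nu < n.+1) polyA (u nu) (iter nu opb x) l j n.

Definition subXi := Xi -> Prop.

Definition genA (phi : Xi) : subXi := fun x => exists u : Atilde, x = actA u phi.

Definition sub_incl (F E : subXi) : Prop := forall x, F x -> E x.

Definition is_submoduleA (F : subXi) : Prop :=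
  F Xi0 /\ (forall x y, F x -> F y -> F (Xiadd x y)) /\
  (forall u x, F x -> F (actA u x)).

Definition monogenic (F : subXi) : Prop :=
  exists psi, F psi /\ forall x, F x <-> genA psi x.

Definition Alinear_on (S : subXi) (f : Xi -> Xi) : Prop :=
  (forall x y, S x -> S y -> f (Xiadd x y) = Xiadd (f x) (f y)) /\
  (forall u x, S x -> f (actA u x) = actA u (f x)).

Definition Aiso (S T : subXi) (f : Xi -> Xi) : Prop :=
  (forall x, S x -> T (f x)) /\
  (forall y, T y -> exists x, S x /\ f x = y) /\
  (forall x y, S x -> S y -> f x = f y -> x = y) /\
  Alinear_on S f.

Definition is_theme (S : subXi) : Prop :=
  exists phi, inXi phi /\ exists f, Aiso S (genA phi) f.

Definition normal_in (F E : subXi) : Prop :=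
  forall x, (F x /\ exists y, E y /\ x = opb y) <-> exists y, F y /\ x = opb y.

(* E/F is a theme: there is theta in Xi and a surjective A~-linear map
   E -> A~ theta with kernel F (i.e. E/F is isomorphic to A~ theta). *)
Definition quotient_is_theme (E F : subXi) : Prop :=
  exists theta, inXi theta /\ exists pi : Xi -> Xi,
    (forall x, E x -> genA theta (pi x)) /\
    (forall y, genA theta y -> exists x, E x /\ pi x = y) /\
    (forall x, E x -> (pi x = Xi0 <-> F x)) /\
    Alinear_on E pi.

(* For the quotient, let
   [k l] be the number of logarithmic levels of [psi] at the exponent [l].  The
   shift [e_{l,j} |-> e_{l,j-k(l)}] commutes with [a] and [b], so it maps
   [A~ phi] A~-linearly onto the theme [A~ (shift k phi)]; its kernel consists
   of the elements of [A~ phi] supported in the box [j < k l].  Operators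
   [a - (l0 + v) b] lower the top level of [psi] at one exponent [l0] while
   keeping the others, because distinct exponents in ]0,1] are incongruent
   modulo the integers; this produces enough elements of [F] to contain every
   box-supported element of large b-order, i.e. [b^M] times the kernel lies in
   [F].  Normality [F cap bE = bF], and stability of [A~ phi] under [b], then
   remove the factor [b^M]. *)

From mathcomp Require Import all_boot all_order all_algebra complex Rstruct.
From mathcomp Require Import ring lra zify.
From Stdlib Require Import FunctionalExtensionality Classical IndefiniteDescription.
Set Implicit Arguments. Unset Strict Implicit. Unset Printing Implicit Defensive.
Import Order.TTheory GRing.Theory Num.Theory.
Local Open Scope ring_scope.

Lemma Xi_ext (x y : Xi) : (forall l j n, x l j n = y l j n) -> x = y.
Proof.
move=> E; do 3 apply: functional_extensionality => ?; exact: E.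
Qed.

Definition b_order_ge (m : nat) (w : Xi) := forall l j n, (n < m)%N -> w l j n = 0.

Lemma iter_opbE k x l j n :
  iter k opb x l j n = if (k <= n)%N then x l j (n - k)%N else 0.
Proof.
elim: k n => [|k IH] [|n] //=; rewrite ?subn0 // /opb IH.
Qed.

Lemma b_order_ge_iter_opb k w : b_order_ge k (iter k opb w).
Proof. by move=> l j n Hn; rewrite iter_opbE leqNgt Hn. Qed.

Lemma b_order_ge_opa m w : b_order_ge m w -> b_order_ge m.+1 (opa w).
Proof. by move=> H l j [|n] //= Hn; rewrite /opa !H // mulr0 add0r. Qed.

Lemma b_order_ge_iter_opa k m w : b_order_ge m w -> b_order_ge (m + k) (iter k opa w).
Proof.
move=> H; elim: k => [|k IH]; first by rewrite addn0.
by rewrite addnS /=; apply: b_order_ge_opa.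
Qed.

Lemma b_order_ge_polyA p m w : b_order_ge m w -> b_order_ge m (polyA p w).
Proof.
move=> H l j n Hn; rewrite /polyA big1 // => k _.
by rewrite (@b_order_ge_iter_opa k m w H) ?mulr0 // ltn_addr.
Qed.

(* [a^k] raises the b-order by [k], so only [k <= n] contributes to [b^n]. *)
Lemma polyA_trunc p z l j n :
  polyA p z l j n = \sum_(k < n.+1) p`_k * iter k opa z l j n.
Proof.
pose t k := p`_k * iter k opa z l j n; pose N := maxn (size p) n.+1.
rewrite /polyA (big_ord_widen N t (leq_maxl _ _)).
rewrite [RHS](big_ord_widen N t (leq_maxr _ _)) big_mkcond [RHS]big_mkcond /=.
apply: eq_bigr => i _; rewrite /t; case: ifP; case: ifP => // Hn Hp.
- by rewrite (@b_order_ge_iter_opa i 0 z) ?mulr0 // ltnNge -ltnS Hn.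
- by rewrite nth_default ?mul0r // leqNgt Hp.
Qed.

Lemma polyA0 z l j n : polyA 0 z l j n = 0.
Proof. by rewrite /polyA size_poly0 big_ord0. Qed.

Lemma polyAC c z l j n : polyA c%:P z l j n = c * z l j n.
Proof.
rewrite /polyA size_polyC; case: eqP => [->|_]; first by rewrite big_ord0 mul0r.
by rewrite big_ord1 coefC.
Qed.

Lemma polyAX z l j n : polyA 'X z l j n = opa z l j n.
Proof.
by rewrite /polyA size_polyX !big_ord_recl big_ord0 !coefX mul0r mul1r add0r addr0.
Qed.

Lemma polyAD p q z l j n :
  polyA (p + q) z l j n = polyA p z l j n + polyA q z l j n.
Proof.
rewrite !polyA_trunc -big_split; apply: eq_bigr => i _; by rewrite coefD mulrDl.
Qed.

Lemma polyAZ c p z l j n : polyA (c *: p) z l j n = c * polyA p z l j n.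
Proof.
rewrite !polyA_trunc mulr_sumr; apply: eq_bigr => i _; by rewrite coefZ mulrA.
Qed.

Lemma polyAMn p k z l j n : polyA (p *+ k) z l j n = k%:R * polyA p z l j n.
Proof. by rewrite -scaler_nat polyAZ. Qed.

Lemma polyA_sum K (P : nat -> {poly CC}) z l j n :
  polyA (\sum_(i < K) P i) z l j n = \sum_(i < K) polyA (P i) z l j n.
Proof.
elim: K => [|K IH]; first by rewrite !big_ord0 polyA0.
by rewrite !big_ord_recr /= polyAD IH.
Qed.

Lemma polyAMX p z l j n : polyA (p * 'X) z l j n = polyA p (opa z) l j n.
Proof.
rewrite !polyA_trunc big_ord_recl coefMX mul0r add0r.
rewrite [RHS]big_ord_recr /= -iterSr (@b_order_ge_iter_opa n.+1 0 z) // mulr0 addr0.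
by apply: eq_bigr => i _; rewrite coefMX /= -iterS iterSr.
Qed.

Lemma opa_add x y : opa (Xiadd x y) = Xiadd (opa x) (opa y).
Proof.
apply: Xi_ext => l j [|m]; rewrite /opa /Xiadd ?addr0 //; ring.
Qed.

Lemma opa_scale c x : opa (Xiscale c x) = Xiscale c (opa x).
Proof. apply: Xi_ext => l j [|m]; rewrite /opa /Xiscale ?mulr0 //; ring. Qed.

Lemma opb_add x y : opb (Xiadd x y) = Xiadd (opb x) (opb y).
Proof. by apply: Xi_ext => l j [|m]; rewrite /opb /Xiadd ?addr0. Qed.

Lemma opb_scale c x : opb (Xiscale c x) = Xiscale c (opb x).
Proof. by apply: Xi_ext => l j [|m]; rewrite /opb /Xiscale ?mulr0. Qed.

Lemma iter_opa_add k x y :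
  iter k opa (Xiadd x y) = Xiadd (iter k opa x) (iter k opa y).
Proof. by elim: k => //= k ->; rewrite opa_add. Qed.

Lemma iter_opa_scale k c x : iter k opa (Xiscale c x) = Xiscale c (iter k opa x).
Proof. by elim: k => //= k ->; rewrite opa_scale. Qed.

Lemma polyA_addr p x y l j n :
  polyA p (Xiadd x y) l j n = polyA p x l j n + polyA p y l j n.
Proof.
rewrite /polyA -big_split; apply: eq_bigr => i _.
by rewrite iter_opa_add /Xiadd mulrDr.
Qed.

Lemma polyA_scaler p c x l j n : polyA p (Xiscale c x) l j n = c * polyA p x l j n.
Proof.
rewrite /polyA mulr_sumr; apply: eq_bigr => i _.
by rewrite iter_opa_scale /Xiscale mulrCA.
Qed.

Lemma opb_opa x : opb (opa x) = Xiadd (opa (opb x)) (Xiscale (-1) (opb (opb x))).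
Proof.
apply: Xi_ext => l j [|[|m]]; rewrite /opb /opa /Xiadd /Xiscale /=.
- by rewrite mulr0 add0r.
- by rewrite !mulr0 !addr0.
- rewrite -[m.+1]addn1 natrD; ring.
Qed.

Lemma iter_opb_opa m z : iter m opb (opa z) =
  Xiadd (opa (iter m opb z)) (Xiscale (- m%:R) (iter m.+1 opb z)).
Proof.
elim: m => [|m IH].
  by apply: Xi_ext => l j n; rewrite /Xiadd /Xiscale oppr0 mul0r addr0.
rewrite iterS IH opb_add opb_scale opb_opa -!iterS.
apply: Xi_ext => l j n; rewrite /Xiadd /Xiscale /= -natr1; ring.
Qed.

Lemma opb_polyA_MXaddC p c z : opb (polyA (p * 'X + c%:P) z) =
  Xiadd (opb (polyA p (opa z))) (Xiscale c (opb z)).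
Proof.
apply: Xi_ext => l j [|n]; rewrite /opb /Xiadd /Xiscale ?mulr0 ?addr0 //.
by rewrite polyAD polyAMX polyAC.
Qed.

(* The relation [ba = ab - b^2] gives [b P(a) = sum_i (-1)^i P^(i)(a) b^(i+1)],
   a finite sum on each coefficient. *)
Lemma opb_polyA p z l j n N : (n <= N)%N ->
  opb (polyA p z) l j n =
  \sum_(i < N) (-1) ^+ i * polyA (p^`(i)) (iter i.+1 opb z) l j n.
Proof.
elim/poly_ind: p z N => [|p c IH] z N hn.
  rewrite big1 => [|i _]; last by rewrite derivn_poly0 ?size_poly0 // polyA0 mulr0.
  by case: n hn => [|n] _ //=; rewrite /opb polyA0.
case: N hn => [|N] hn; first by move: hn; rewrite leqn0 => /eqP ->; rewrite big_ord0.
rewrite opb_polyA_MXaddC /Xiadd /Xiscale (IH (opa z) N.+1 hn).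
under eq_bigr do rewrite iter_opb_opa polyA_addr polyA_scaler -polyAMX mulrDr.
rewrite big_split /=.
have top_vanishes i : (n < i.+2)%N ->
    polyA p^`(i) (opb (opb (iter i opb z))) l j n = 0.
  exact: (b_order_ge_polyA _ (@b_order_ge_iter_opb i.+2 z)).
rewrite [X in X + _ + _]big_ord_recl [X in _ + X + _]big_ord_recr /=.
rewrite top_vanishes ?ltnS // !mulr0 addr0.
rewrite [RHS]big_ord_recl /= ?derivn0 polyAD polyAC expr0 !mul1r.
rewrite -!addrA; congr (_ + _); rewrite addrA addrC; congr (_ + _).
rewrite -big_split; apply: eq_bigr => i _ /=.
rewrite -!derivnS derivnMXaddC polyAD polyAMn /bump /= add1n exprS; ring.
Qed.

Lemma sum_triangle K (G : nat -> nat -> CC) :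
  \sum_(mu < K.+1) \sum_(nu < mu) G nu (mu.-1 - nu)%N =
  \sum_(nu < K) \sum_(i < K - nu) G nu i.
Proof.
elim: K => [|K IH]; first by rewrite big_ord1 !big_ord0.
rewrite big_ord_recr /= IH [RHS]big_ord_recr /= subSnn big_ord1.
have -> : \sum_(i < K) \sum_(i0 < K.+1 - i) G i i0 =
    \sum_(i < K) (\sum_(i0 < K - i) G i i0 + G i (K - i)%N).
  by apply: eq_bigr => i _; rewrite subSn ?big_ord_recr // ltnW.
by rewrite big_split /= -addrA big_ord_recr /= subnn.
Qed.

Lemma sum_square_triangle K (G : nat -> nat -> CC) :
  (forall nu i, (K <= nu + i)%N -> G nu i = 0) ->
  \sum_(nu < K) \sum_(i < K) G nu i =
  \sum_(mu < K.+1) \sum_(nu < mu) G nu (mu.-1 - nu)%N.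
Proof.
move=> HG; rewrite sum_triangle; apply: eq_bigr => nu _.
rewrite (big_ord_widen K (G nu) (leq_subr _ _)) big_mkcond [RHS]big_mkcond.
by apply: eq_bigr => i _; case: ifP => // H; rewrite HG // -leq_subLR leqNgt H.
Qed.

Lemma genA_opb phi x : genA phi x -> genA phi (opb x).
Proof.
move=> [u ->].
exists (fun mu => \sum_(nu < mu) (-1) ^+ (mu.-1 - nu)%N *: (u nu)^`(mu.-1 - nu)).
apply: Xi_ext => l j [|m]; first by rewrite /actA big_ord1 big_ord0 polyA0.
rewrite /actA /=.
under eq_bigr => nu _ do
  rewrite -[polyA _ _ _ _ _]/(opb (polyA (u nu) (iter nu opb phi)) l j m.+1)
          (@opb_polyA _ _ l j m.+1 m.+1 (leqnn _)).
rewrite (sum_square_triangle (G := fun nu i => (-1) ^+ i *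
     polyA (u nu)^`(i) (iter i.+1 opb (iter nu opb phi)) l j m.+1)).
  apply: eq_bigr => mu _.
  rewrite (@polyA_sum mu (fun nu => (-1) ^+ (mu.-1 - nu)%N *: (u nu)^`(mu.-1 - nu))).
  apply: eq_bigr => nu _.
  rewrite polyAZ -iterD; congr (_ * polyA _ _ _ _ _).
  apply: (congr1 (fun k => iter k opb phi)).
  by case: mu nu => [[|mu] //= Hmu] [nu /= Hnu]; rewrite addSn subnK // -ltnS.
move=> nu i Hi; rewrite -iterD.
rewrite (b_order_ge_polyA _ (@b_order_ge_iter_opb (i.+1 + nu) phi)) ?mulr0 //.
by rewrite addSn ltnS addnC.
Qed.

Definition supported (P : rat -> nat -> Prop) (x : Xi) :=
  forall l j n, ~ P l j -> x l j n = 0.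

Definition down_closed (P : rat -> nat -> Prop) := forall l j, P l j.+1 -> P l j.

Lemma supported_opb P x : supported P x -> supported P (opb x).
Proof. by move=> sx l j [|m] nP //=; rewrite /opb sx. Qed.

Lemma supported_iter_opb P k x : supported P x -> supported P (iter k opb x).
Proof. by move=> sx; elim: k => //= k; apply: supported_opb. Qed.

Section DownClosedSupport.
Variables (P : rat -> nat -> Prop) (downP : down_closed P).

Lemma supported_opa x : supported P x -> supported P (opa x).
Proof.
by move=> sx l j [|m] nP //=; rewrite /opa !sx ?mulr0 ?add0r // => /downP.
Qed.

Lemma supported_iter_opa k x : supported P x -> supported P (iter k opa x).
Proof. by move=> sx; elim: k => //= k; apply: supported_opa. Qed.

Lemma supported_actA u x : supported P x -> supported P (actA u x).
Proof.
move=> sx l j n nP; rewrite /actA big1 // => nu _; rewrite /polyA big1 // => k _.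
by rewrite supported_iter_opa ?mulr0 //; apply: supported_iter_opb.
Qed.

End DownClosedSupport.

Lemma genA_supported P phi x : down_closed P ->
  supported P phi -> genA phi x -> supported P x.
Proof. by move=> downP sphi [u ->]; apply: supported_actA. Qed.

(* Finite sums in [Xi] are those supported below a finite [s]. *)
Definition below_seq (s : seq (rat * nat)) (l : rat) (j : nat) : Prop :=
  0 < l <= 1 /\ exists j', (j <= j')%N /\ (l, j') \in s.

Lemma down_closed_below_seq s : down_closed (below_seq s).
Proof. by move=> l j [Hl [j' [/ltnW le Hs]]]; split => //; exists j'. Qed.

Lemma inXi_supported x : inXi x -> exists s, supported (below_seq s) x.
Proof.
move=> [Hl [s Hs]]; exists s => l j n nP.
case: (boolP (0 < l <= 1)) => [l01|/andP l01]; last by apply: Hl.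
by apply: Hs; apply/negP => Hin; apply: nP; split => //; exists j.
Qed.

Lemma supported_inXi s x : supported (below_seq s) x -> inXi x.
Proof.
move=> sx; split.
  by move=> l j n Hl; apply: sx => -[/andP].
exists (flatten [seq [seq (p.1, i) | i <- iota 0 p.2.+1] | p <- s]) => l j n Hn.
apply: sx => -[_ [j' [le Hs]]]; move/negP: Hn; apply.
apply/flatten_mapP; exists (l, j') => //.
by apply/mapP; exists j; rewrite // mem_iota add0n ltnS.
Qed.

(* [shift k] sends [e_{l,j}] to [e_{l,j-k(l)}] (and to [0] when [j < k(l)]). *)
Definition shift (k : rat -> nat) (x : Xi) : Xi := fun l j n => x l (j + k l)%N n.

Lemma shift_opa k x : shift k (opa x) = opa (shift k x).
Proof. by apply: Xi_ext => l j [|m] //; rewrite /shift /opa addSn. Qed.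

Lemma shift_opb k x : shift k (opb x) = opb (shift k x).
Proof. by apply: Xi_ext => l j [|m]. Qed.

Lemma shift_actA k u x : shift k (actA u x) = actA u (shift k x).
Proof.
have sh_b i : shift k (iter i opb x) = iter i opb (shift k x).
  by elim: i => //= i IH; rewrite shift_opb IH.
have sh_a i y : shift k (iter i opa y) = iter i opa (shift k y).
  by elim: i => //= i IH; rewrite shift_opa IH.
apply: Xi_ext => l j n; apply: eq_bigr => nu _; rewrite -sh_b.
by apply: eq_bigr => i _; rewrite -sh_a.
Qed.

Lemma supported_shift P k x : down_closed P ->
  supported P x -> supported P (shift k x).
Proof.
move=> downP sx l j n nP; apply: sx => Pjk; apply: nP.
by elim: (k l) Pjk => [|d IH]; rewrite ?addn0 // addnS => /downP.
Qed.

Lemma shift_eq0 k x :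
  (shift k x = Xi0) <-> supported (fun l j => (j < k l)%N) x.
Proof.
split=> [Tx l j n | sx].
  move/negP; rewrite -leqNgt => /subnK <-.
  by have := congr1 (fun w : Xi => w l (j - k l)%N n) Tx.
by apply: Xi_ext => l j n; apply: sx; apply/negP; rewrite -leqNgt leq_addl.
Qed.

Definition conv (S t : nat -> CC) (n : nat) := \sum_(nu < n.+1) S nu * t (n - nu)%N.

Lemma conv_shift S t U v n :
  (forall k, t k = if (v <= k)%N then U (k - v)%N else 0) ->
  conv S t n = if (v <= n)%N then conv S U (n - v)%N else 0.
Proof.
move=> Ht; rewrite /conv; case: leqP => Hv; last first.
  rewrite big1 // => i _; rewrite Ht ifF ?mulr0 //; apply/negbTE; rewrite -ltnNge.
  exact: leq_ltn_trans (leq_subr _ _) Hv.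
rewrite (big_ord_widen n.+1 (fun nu => S nu * U (n - v - nu)%N)) ?ltnS ?leq_subr //.
rewrite [RHS]big_mkcond; apply: eq_bigr => i _; rewrite Ht.
have Hin := ltn_ord i; case: ifP => Hi.
  have -> : (i < (n - v).+1)%N by lia.
  by rewrite subnAC.
have -> : (i < (n - v).+1)%N = false by apply/negbTE/negP; lia.
by rewrite mulr0.
Qed.

Lemma conv_at S t o : (forall k, (k < o)%N -> t k = 0) -> conv S t o = S 0%N * t o.
Proof.
move=> Ht; rewrite /conv big_ord_recl subn0 big1 ?addr0 // => i _.
have lt_io := ltn_ord i; rewrite Ht ?mulr0 // lift0; lia.
Qed.

Lemma conv_delta0 S n : conv S (fun k => (k == 0)%N%:R) n = S n.
Proof.
rewrite /conv big_ord_recr /= subnn eqxx mulr1 big1 ?add0r // => i _.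
by rewrite subn_eq0 leqNgt ltn_ord mulr0.
Qed.

Lemma series_order (t : nat -> CC) : (exists n, t n <> 0) ->
  exists v, t v <> 0 /\ forall n, (n < v)%N -> t n = 0.
Proof.
move=> [n /eqP tn]; have exn : exists n, t n != 0 by exists n.
case: (ex_minnP exn) => v /eqP tv vmin; exists v; split => // m ltmv.
by apply/eqP; apply: contraTT ltmv => /vmin; rewrite -leqNgt.
Qed.

Fixpoint inv_coefs (U : nat -> CC) (n : nat) : seq CC :=
  if n is n'.+1 then
    let s := inv_coefs U n' in
    rcons s (- (U 0%N)^-1 * \sum_(t < n'.+1) nth 0 s t * U (n'.+1 - t)%N)
  else [:: (U 0%N)^-1].

Lemma size_inv_coefs U n : size (inv_coefs U n) = n.+1.
Proof. by elim: n => //= n IH; rewrite size_rcons IH. Qed.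

Lemma nth_inv_coefs U n m t : (t <= n)%N -> (n <= m)%N ->
  nth 0 (inv_coefs U m) t = nth 0 (inv_coefs U n) t.
Proof.
move=> Htn; elim: m => [|m IH] Hnm; first by move: Hnm; rewrite leqn0 => /eqP ->.
case: (leqP n m) => Hn.
  by rewrite /= nth_rcons size_inv_coefs ifT ?IH // ltnS (leq_trans Htn).
by have -> : n = m.+1 by apply/eqP; rewrite eqn_leq Hnm.
Qed.

Lemma series_inv (U : nat -> CC) : U 0%N != 0 ->
  exists W : nat -> CC, W 0%N != 0 /\ forall n, conv W U n = (n == 0)%N%:R.
Proof.
move=> HU; exists (fun n => nth 0 (inv_coefs U n) n); split; first by rewrite invr_eq0.
case => [|n]; first by rewrite /conv big_ord1 subn0 mulVf.
rewrite /conv big_ord_recr /= subnn nth_rcons size_inv_coefs ltnn eqxx /=.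
under [X in _ + _ * X * _]eq_bigr => i _ do
  rewrite (@nth_inv_coefs U i n i (leqnn _) (ltn_ord i)).
by rewrite mulrAC mulNr mulVf // mulN1r subrr.
Qed.

Definition seriesA (S : nat -> CC) : Atilde := fun nu => (S nu)%:P.

Lemma actA_seriesA S x : actA (seriesA S) x = fun l j n => conv S (x l j) n.
Proof.
apply: Xi_ext => l j n; apply: eq_bigr => nu _.
by rewrite polyAC iter_opbE -ltnS ltn_ord.
Qed.

Lemma actA_X x : actA (fun nu => if nu is 0 then 'X else 0) x = opa x.
Proof.
apply: Xi_ext => l j n; rewrite /actA big_ord_recl polyAX big1 ?addr0 //.
by move=> i _; rewrite polyA0.
Qed.

Section Submodule.
Variable F : subXi.
Hypothesis hF : is_submoduleA F.

Lemma submodule0 : F Xi0. Proof. by case: hF. Qed.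

Lemma submoduleD x y : F x -> F y -> F (Xiadd x y).
Proof. by case: hF => _ [H _]; apply: H. Qed.

Lemma submodule_conv S x : F x -> F (fun l j n => conv S (x l j) n).
Proof. by case: hF => _ [_ H] Fx; rewrite -actA_seriesA; apply: H. Qed.

Lemma submodule_opa x : F x -> F (opa x).
Proof. by case: hF => _ [_ H] Fx; rewrite -actA_X; apply: H. Qed.

Lemma submodule_scale c x : F x -> F (Xiscale c x).
Proof.
move=> /(submodule_conv (fun k => if k is 0 then c else 0)).
congr F; apply: Xi_ext => l j n; rewrite /conv big_ord_recl subn0 big1 ?addr0 //.
by move=> i _; rewrite mul0r.
Qed.

Lemma submodule_opb x : F x -> F (opb x).
Proof.
move=> /(submodule_conv (fun k => if k is 1 then 1 else 0)).
congr F; apply: Xi_ext => l j [|n]; rewrite /conv ?big_ord1 ?mul0r //.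
rewrite !big_ord_recl big1 ?mul0r ?add0r ?addr0 ?mul1r ?subn1 //.
by move=> i _; rewrite mul0r.
Qed.

End Submodule.

Lemma exponent_shift_neq0 (l l0 : rat) (o v : nat) :
  0 < l <= 1 -> 0 < l0 <= 1 -> l != l0 ->
  (ratr l + o%:R - (ratr l0 + v%:R) : CC) != 0.
Proof.
move=> /andP [l_gt0 l_le1] /andP [l0_gt0 l0_le1] neq_ll0.
have -> : (ratr l + o%:R - (ratr l0 + v%:R) : CC) = ratr (l + o%:R - (l0 + v%:R)).
  by rewrite rmorphB !rmorphD !rmorph_nat.
rewrite fmorph_eq0; apply/eqP => E.
case: (ltngtP o v) => ov.
- have : (o%:R + 1 <= v%:R :> rat) by rewrite natr1 ler_nat.
  lra.
- have : (v%:R + 1 <= o%:R :> rat) by rewrite natr1 ler_nat.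
  lra.
- by move/eqP: neq_ll0; apply; subst o; lra.
Qed.

Definition log_profile (y : Xi) (h : rat -> nat) :=
  (forall l j n, (h l <= j)%N -> y l j n = 0) /\
  (forall l, (0 < h l)%N -> exists n, y l (h l).-1 n <> 0).

Lemma log_profile_ext y h h' : log_profile y h -> h =1 h' -> log_profile y h'.
Proof.
move=> [P1 P2] E; split=> [l j n|l]; rewrite -E; [exact: P1 | exact: P2].
Qed.

Section LowerProfile.
Variable F : subXi.
Hypothesis hF : is_submoduleA F.
Hypothesis exponentsF : forall y, F y -> supported (fun l _ => 0 < l <= 1) y.

Lemma exponent_range y l j n : F y -> y l j n <> 0 -> 0 < l <= 1.
Proof. by move=> Fy yn0; apply: NNPP => nl; apply: yn0; apply: (exponentsF Fy). Qed.

(* Normalize the top coefficient at [l0] to [b^v] by a unit of C[[b]], then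
   apply [a - (l0 + v) b]: it kills that coefficient and multiplies the top
   coefficient at every other exponent by a nonzero constant. *)
Lemma log_profile_pred y h l0 : F y -> log_profile y h -> (0 < h l0)%N ->
  exists y', F y' /\ log_profile y' (fun l => if l == l0 then (h l0).-1 else h l).
Proof.
move=> Fy [P1 P2] hl0; set k0 := (h l0).-1.
have hk0 : k0.+1 = h l0 by rewrite /k0 prednK.
have [v [tv tlow]] := series_order (P2 l0 hl0).
pose U m := y l0 k0 (m + v)%N.
have [W [W0 HW]] : exists W, W 0%N != 0 /\ forall n, conv W U n = (n == 0)%N%:R.
  by apply: series_inv; rewrite /U add0n; apply/eqP.
pose y1 : Xi := fun l j n => conv W (y l j) n.
have y1top n : y1 l0 k0 n = (n == v)%N%:R.
  rewrite /y1 (@conv_shift W (y l0 k0) U v n) => [|k].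
    case: leqP => H; first by rewrite HW subn_eq0 eqn_leq H andbT.
    by rewrite ltn_eqF.
  by case: leqP => H; [rewrite /U subnK | exact: tlow].
have y1zero l j n : (h l <= j)%N -> y1 l j n = 0.
  by move=> H; rewrite /y1 /conv big1 // => i _; rewrite P1 // mulr0.
pose y2 := Xiadd (opa y1) (Xiscale (- (ratr l0 + v%:R)) (opb y1)).
have Fy2 : F y2.
  have Fy1 : F y1 by apply: submodule_conv.
  apply: submoduleD => //; first exact: submodule_opa.
  by apply: submodule_scale => //; apply: submodule_opb.
have y2S l j n : y2 l j n.+1 =
    (ratr l + n%:R - (ratr l0 + v%:R)) * y1 l j n + y1 l j.+1 n.
  by rewrite /y2 /Xiadd /Xiscale /=; ring.
exists y2; split => //; split => [l j [|n] H|l].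
- by rewrite /y2 /Xiadd /Xiscale /= mulr0 addr0.
- rewrite y2S; case: (eqVneq l l0) H => [-> | ne] H; last first.
    by rewrite !y1zero ?mulr0 ?addr0 // ltnW.
  rewrite (y1zero l0 j.+1) ?addr0; last by rewrite -hk0 ltnS.
  case: (eqVneq j k0) => [-> | nej].
    by rewrite y1top; case: (eqVneq n v) => [-> | nev]; rewrite ?subrr ?mul0r ?mulr0.
  by rewrite y1zero ?mulr0 // -hk0 ltn_neqAle eq_sym nej.
- case: (eqVneq l l0) => [-> | ne]; rewrite ?eqxx ?(negbTE ne) => H.
    exists v.+1; rewrite y2S subrr mul0r add0r prednK // y1top eqxx.
    by apply/eqP; rewrite oner_eq0.
  have [o [so slow]] := series_order (P2 l H).
  exists o.+1; rewrite y2S (y1zero l (h l).-1.+1) ?prednK // addr0.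
  rewrite /y1 (conv_at W slow); apply/eqP; rewrite !mulf_neq0 //; last exact/eqP.
  exact: exponent_shift_neq0 (exponent_range Fy so) (exponent_range Fy tv) ne.
Qed.

Lemma log_profile_sub y h l0 d : F y -> log_profile y h -> (d <= h l0)%N ->
  exists y', F y' /\ log_profile y' (fun l => if l == l0 then (h l0 - d)%N else h l).
Proof.
move=> Fy Py; elim: d => [|d IH] Hd.
  exists y; split => //; apply: (log_profile_ext Py) => l.
  by case: eqP => // ->; rewrite subn0.
have [y1 [Fy1 Py1]] := IH (ltnW Hd).
have := @log_profile_pred y1 _ l0 Fy1 Py1; rewrite eqxx subn_gt0.
move=> /(_ Hd) [y2 [Fy2 Py2]].
exists y2; split => //; apply: (log_profile_ext Py2) => l.
by case: eqP => // _; rewrite subnS.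
Qed.

Lemma log_profile_lower y h h' (s : seq rat) : F y -> log_profile y h ->
  (forall l, (h' l <= h l)%N) ->
  exists y', F y' /\ log_profile y' (fun l => if l \in s then h' l else h l).
Proof.
move=> Fy Py Hle; elim: s => [|l0 s [y1 [Fy1 Py1]]].
  by exists y; split => //; apply: (log_profile_ext Py) => l; rewrite in_nil.
set h1 := (fun l => if l \in s then h' l else h l) in Py1.
have [y2 [Fy2 Py2]] := log_profile_sub (d := (h1 l0 - h' l0)%N) Fy1 Py1 (leq_subr _ _).
exists y2; split => //; apply: (log_profile_ext Py2) => l.
rewrite in_cons /h1; case: (eqVneq l l0) => [-> | ne] //=.
by case: ifP => _; [rewrite subnn subn0 | rewrite subKn].
Qed.

End LowerProfile.

Lemma ex_min_nat (P : nat -> Prop) : (exists n, P n) ->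
  exists n, P n /\ forall m, P m -> (n <= m)%N.
Proof.
move=> [k Pk]; apply: NNPP => nomin.
have noP n m : (m <= n)%N -> ~ P m.
  elim: n m => [|n IH] m le_mn Pm.
    by apply: nomin; exists m; split => // m' _; move: le_mn; rewrite leqn0 => /eqP ->.
  apply: nomin; exists m; split => // m' Pm'; rewrite leqNgt; apply/negP => lt_m'm.
  by apply: (IH m') => //; rewrite -ltnS (leq_trans lt_m'm).
exact: (noP k k (leqnn k) Pk).
Qed.

Lemma exists_log_profile x s : supported (below_seq s) x ->
  exists k, log_profile x k /\ forall l, l \notin map fst s -> k l = 0%N.
Proof.
move=> sx; pose vanish_from l h := forall j n, (h <= j)%N -> x l j n = 0.
have least l : exists h, vanish_from l h /\ forall m, vanish_from l m -> (h <= m)%N.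
  apply: ex_min_nat; exists (\sum_(p <- s) p.2.+1)%N => j n Hj.
  apply: sx => -[_ [j' [le_jj' Hs]]].
  have : (j'.+1 <= \sum_(p <- s) p.2.+1)%N by rewrite (big_rem _ Hs) leq_addr.
  by rewrite ltnNge (leq_trans Hj le_jj').
have [k Hk] := functional_choice _ least.
exists k; split; first split.
- by move=> l; case: (Hk l).
- move=> l kl_gt0; apply: NNPP => col0; have [vk kmin] := Hk l.
  suff : (k l <= (k l).-1)%N by rewrite -ltnS prednK // ltnn.
  apply: kmin => j n; rewrite leq_eqVlt => /orP [/eqP <- | lt_j].
    by apply: NNPP => xn; apply: col0; exists n.
  by apply: vk; rewrite -(prednK kl_gt0).
- move=> l ls; apply/eqP; rewrite -leqn0; apply: (Hk l).2 => j n _.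
  by apply: sx => -[_ [j' [_ Hs]]]; move/negP: ls; apply; apply/mapP; exists (l, j').
Qed.

Section FillBox.
Variable F : subXi.
Hypothesis hF : is_submoduleA F.
Hypothesis exponentsF : forall y, F y -> supported (fun l _ => 0 < l <= 1) y.
Variables (psi : Xi) (k : rat -> nat) (s : seq rat).
Hypotheses (Fpsi : F psi) (Ppsi : log_profile psi k).
Hypothesis k_supp : forall l, l \notin s -> k l = 0%N.

(* An element of [F] whose only levels are [0..j] at [l0] has, after
   normalization, top coefficient [b^v]; its C[[b]]-multiples clear the top
   coefficient of any [y] of b-order at least [v], and induction on [j] handles
   the remaining levels. *)
Lemma fill_column l0 j : (j <= k l0)%N -> exists m, forall y : Xi,
  (forall l i n, (l <> l0 \/ (j <= i)%N) -> y l i n = 0) ->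
  (forall i n, (n < m)%N -> y l0 i n = 0) -> F y.
Proof.
elim: j => [|j IH] Hj.
  exists 0%N => y Y1 _.
  have -> : y = Xi0 by apply: Xi_ext => l i n; apply: Y1; right.
  exact: submodule0.
have [m' IHm] := IH (ltnW Hj).
pose h' l := if l == l0 then j.+1 else 0%N.
have le_h'k l : (h' l <= k l)%N by rewrite /h'; case: eqP => // ->.
have [z [Fz Pz]] := log_profile_lower hF exponentsF s Fpsi Ppsi le_h'k.
have {Pz} [Z1 Z2] : log_profile z h'.
  apply: (log_profile_ext Pz) => l; case: ifP => // Hl.
  rewrite k_supp ?Hl // /h'; case: eqP => // El; subst l.
  by move: Hj; rewrite k_supp ?Hl.
have [v [tv tlow]] : exists v, z l0 j v <> 0 /\ forall n, (n < v)%N -> z l0 j n = 0.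
  by apply: series_order; have := Z2 l0; rewrite /h' eqxx; apply.
pose U m := z l0 j (m + v)%N.
have [W [_ HW]] : exists W, W 0%N != 0 /\ forall n, conv W U n = (n == 0)%N%:R.
  by apply: series_inv; rewrite /U add0n; apply/eqP.
pose z1 : Xi := fun l i n => conv W (z l i) n.
have z1top n : z1 l0 j n = if (v <= n)%N then ((n - v)%N == 0%N)%:R else 0.
  rewrite /z1 (@conv_shift W (z l0 j) U v n) => [|kk]; first by case: leqP.
  by case: leqP => H; [rewrite /U subnK | exact: tlow].
have z1zero l i n : (h' l <= i)%N -> z1 l i n = 0.
  by move=> H; rewrite /z1 /conv big1 // => ii _; rewrite Z1 // mulr0.
exists (v + m')%N => y Y1 Y2.
pose y3 : Xi := fun l i n => conv (fun n => y l0 j (n + v)%N) (z1 l i) n.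
have Fy3 : F y3.
  have Fz1 : F z1 by apply: submodule_conv.
  exact: (submodule_conv hF _ Fz1).
have y3top n : y3 l0 j n = y l0 j n.
  rewrite /y3 (@conv_shift _ (z1 l0 j) (fun kk => (kk == 0)%N%:R) v n) //.
  case: leqP => H; first by rewrite conv_delta0 subnK.
  by rewrite Y2 // (leq_trans H) // leq_addr.
have y3low l i n : (n < m')%N -> y3 l i n = 0.
  move=> Hn; rewrite /y3 /conv big1 // => nu _; rewrite Y2 ?mul0r //.
  by rewrite addnC ltn_add2l (leq_ltn_trans _ Hn) // -ltnS.
have y3zero l i n : (l <> l0 \/ (j < i)%N) -> y3 l i n = 0.
  move=> H; rewrite /y3 /conv big1 // => nu _; rewrite z1zero ?mulr0 // /h'.
  by case: eqP H => [-> [] //|_ _].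
pose y4 : Xi := fun l i n => y l i n - y3 l i n.
have Fy4 : F y4.
  apply: IHm => [l i n [H|H] | i n Hn]; rewrite /y4.
  - by rewrite Y1 ?y3zero ?subrr //; left.
  - case: (eqVneq l l0) => [El|ne]; last by rewrite Y1 ?y3zero ?subrr //; left; apply/eqP.
    subst l; case: (eqVneq i j) => [-> | nij]; first by rewrite y3top subrr.
    have Hji : (j < i)%N by rewrite ltn_neqAle eq_sym nij H.
    by rewrite Y1 ?y3zero ?subrr //; right.
  - by rewrite y3low // Y2 ?subrr // (leq_trans Hn) // leq_addl.
have -> : y = Xiadd y3 y4 by apply: Xi_ext => l i n; rewrite /Xiadd /y4 addrC subrK.
exact: submoduleD.
Qed.

Lemma fill_box : exists M, forall y : Xi,
  supported (fun l i => (i < k l)%N) y -> b_order_ge M y -> F y.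
Proof.
suff fill_cols (t : seq rat) : exists M, forall y : Xi,
    (forall l i n, ((k l <= i)%N \/ l \notin t) -> y l i n = 0) ->
    b_order_ge M y -> F y.
  have [M HM] := fill_cols s; exists M => y Y1 Y2; apply: HM => // l i n [H|H].
    by apply: Y1; apply/negP; rewrite -leqNgt.
  by apply: Y1; rewrite k_supp.
elim: t => [|l0 t [M1 IH]].
  exists 0%N => y Y1 _.
  have -> : y = Xi0 by apply: Xi_ext => l i n; apply: Y1; right.
  exact: submodule0.
have [m Hm] := fill_column (leqnn (k l0)).
exists (maxn M1 m) => y Y1 Y2.
pose col : Xi := fun l i n => if l == l0 then y l i n else 0.
pose rest : Xi := fun l i n => if l == l0 then 0 else y l i n.
have -> : y = Xiadd col rest.
  by apply: Xi_ext => l i n; rewrite /Xiadd /col /rest; case: eqP; rewrite ?addr0 ?add0r.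
apply: submoduleD => //.
  apply: Hm => [l i n [H|H] | i n Hn]; rewrite /col.
  - by case: eqP.
  - by case: eqP => // ->; apply: Y1; left.
  - by rewrite eqxx Y2 // (leq_trans Hn) // leq_maxr.
apply: IH => [l i n [H|H] | l i n Hn]; rewrite /rest; case: eqP => // /eqP ne.
- by apply: Y1; left.
- by apply: Y1; right; rewrite in_cons negb_or ne.
- by rewrite Y2 // (leq_trans Hn) // leq_maxl.
Qed.

End FillBox.

Lemma opb_inj : injective opb.
Proof.
move=> x y E; apply: Xi_ext => l j n.
exact: (congr1 (fun w : Xi => w l j n.+1) E).
Qed.

Lemma normal_iter_opb (F E : subXi) M x : normal_in F E ->
  (forall x, E x -> E (opb x)) -> E x -> F (iter M opb x) -> F x.
Proof.
move=> normalF Eb; elim: M x => [|M IH] x Ex //.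
rewrite iterSr => /(IH _ (Eb _ Ex)) Fbx.
have [y [Fy /opb_inj ->]] : exists y, F y /\ opb x = opb y.
  by apply/normalF; split => //; exists x.
exact: Fy.
Qed.

Lemma monogenic_theme (F : subXi) psi :
  inXi psi -> (forall x, F x <-> genA psi x) -> is_theme F.
Proof.
move=> Xpsi HF; exists psi; split => //; exists id.
split; first by move=> x /HF.
split; first by move=> y /HF Fy; exists y.
by [].
Qed.

Lemma shift_quotient_theme (phi : Xi) (F : subXi) (k : rat -> nat) :
  inXi (shift k phi) -> (forall x, genA phi x -> (shift k x = Xi0 <-> F x)) ->
  quotient_is_theme (genA phi) F.
Proof.
move=> Xsphi kerF; exists (shift k phi); split => //; exists (shift k).
split; first by move=> x [u ->]; exists u; rewrite shift_actA.
split.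
  by move=> y [u ->]; exists (actA u phi); split; [exists u | rewrite shift_actA].
by split => //; split => // u x _; apply: shift_actA.
Qed.

Lemma down_closed_lt (k : rat -> nat) : down_closed (fun l j => (j < k l)%N).
Proof. by move=> l j /ltnW. Qed.

Theorem theorem3p3 (phi : Xi) (F : subXi) :
  inXi phi ->
  sub_incl F (genA phi) ->
  is_submoduleA F ->
  monogenic F ->
  is_theme F /\ (normal_in F (genA phi) -> quotient_is_theme (genA phi) F).
Proof.
move=> Xphi subF hF [psi [Fpsi HF]].
have [s sphi] := inXi_supported Xphi.
have below_s := @down_closed_below_seq s.
have sE x : genA phi x -> supported (below_seq s) x := genA_supported below_s sphi.
have spsi := sE _ (subF _ Fpsi).
split; first exact: monogenic_theme (supported_inXi spsi) HF.
move=> normalF.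
have exponentsF y : F y -> supported (fun l _ => 0 < l <= 1) y.
  by move=> /subF /sE sy l j n l01; apply: sy => -[].
have [k [Pk ks]] := exists_log_profile spsi.
have [M fillM] := fill_box hF exponentsF Fpsi Pk ks.
apply: (@shift_quotient_theme _ _ k).
  exact: supported_inXi (supported_shift k below_s sphi).
move=> x Ex; rewrite shift_eq0; split => [box | /HF Fx].
  apply: (normal_iter_opb normalF (@genA_opb phi) Ex (M := M)).
  apply: fillM; [exact: supported_iter_opb box | exact: b_order_ge_iter_opb].
apply: genA_supported Fx; first exact: down_closed_lt.
by move=> l j n /negP; rewrite -leqNgt; apply: Pk.1.
Qed.
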